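(* Let $\mathbb{S}$ be a locally finite (i.e. $\mathbb{S}\cap H$ is finite for every bounded $H\subset\mathbb{R}$), unbounded subset of $[0,\infty)$ with $0\in\mathbb{S}$. Let $(X_t)_{t\in\mathbb{N}}$ be an $\mathbb{S}$-valued process adapted to a filtration $(\mathcal{F}_t)_{t\in\mathbb{N}}$ with $\mathbb{P}[X_1=0]=1$. Assume that for each $x,y\in\mathbb{S}$ there exist $m(x,y)\in\mathbb{N}$ and $\varphi(x,y)>0$ such that $\mathbb{P}[X_{t+m(X_t,y)}=y\mid\mathcal{F}_t]\ge\varphi(X_t,y)$ a.s. for all $t\in\mathbb{N}$. Then $\limsup_{t\to\infty}X_t=\infty$ a.s. If in addition $\mathbb{P}[\eta_{n+1}<\infty\mid\tau_n<\infty]=\mathbb{P}[\eta_1<\infty]$ for all $n\in\mathbb{N}$, then exactly one of the following holds: (i) $\mathbb{P}[\eta_1<\infty]<1$ and $\lim_{t\to\infty}X_t=\infty$ a.s.; or (ii) $\mathbb{P}[\eta_1<\infty]=1$ and $\liminf_{t\to\infty}X_t=0$ a.s.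
   Context: $\mathbb{N}=\{1,2,\dots\}$. Return times to $0$: $\tau_0:=1$ and $\tau_n:=\min\{t>\tau_{n-1}:X_t=0\}$ for $n\in\mathbb{N}$ (with $\min\emptyset=\infty$); when $\tau_n<\infty$, $\eta_n:=\tau_n-\tau_{n-1}$ is the duration of the $n$th excursion (with $\eta_n=\infty$ otherwise). *)

From HB Require Import structures.
From mathcomp Require Import all_boot all_order all_algebra.
From mathcomp Require Import all_classical all_reals all_analysis.
Set Implicit Arguments. Unset Strict Implicit. Unset Printing Implicit Defensive.
Import Order.TTheory GRing.Theory Num.Theory.
Local Open Scope classical_set_scope.
Local Open Scope ring_scope.

(* Time index: t : nat, only t >= 1 is used (N = {1,2,...}). *)

Section Returns.
Context {Omega : Type} {R : realType}.
Variable X : nat -> Omega -> R.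

Definition next_zero (s : nat) (w : Omega) : option nat :=
  match pselect (exists t, (s < t)%N && (X t w == 0)) with
  | left h => Some (ex_minn h)
  | right _ => None
  end.

(* tau_0 := 1, tau_n := min{t > tau_{n-1} : X_t = 0}; None stands for infinity *)
Fixpoint ret_time (n : nat) (w : Omega) : option nat :=
  match n with
  | O => Some 1%N
  | S n' => obind (fun s => next_zero s w) (ret_time n' w)
  end.

(* eta_n := tau_n - tau_{n-1} when tau_n < oo, and infinity (None) otherwise *)
Definition exc_len (n : nat) (w : Omega) : option nat :=
  match ret_time n w, ret_time n.-1 w with
  | Some a, Some b => Some (a - b)%N
  | _, _ => None
  end.
End Returns.

Definition locally_finite {R : realType} (S : set R) : Prop :=
  forall H : set R, (exists M : R, forall x, H x -> `|x| <= M) ->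
    finite_set (S `&` H).

Definition unbounded_above {R : realType} (S : set R) : Prop :=
  forall M : R, exists2 x, S x & M < x.

Definition filtration {d} {Omega : measurableType d}
  (F : nat -> set (set Omega)) : Prop :=
  (forall t, (1 <= t)%N -> sigma_algebra setT (F t) /\ F t `<=` measurable) /\
  (forall s t, (1 <= s)%N -> (s <= t)%N -> F s `<=` F t).

Definition adapted {d} {Omega : measurableType d} {R : realType}
  (F : nat -> set (set Omega)) (X : nat -> Omega -> R) : Prop :=
  forall t, (1 <= t)%N -> forall A : set R, measurable A -> F t (X t @^-1` A).

From HB Require Import structures.
From mathcomp Require Import all_boot all_order all_algebra.
From mathcomp Require Import all_classical all_reals all_analysis.
Import Order.TTheory GRing.Theory Num.Theory.
Local Open Scope classical_set_scope.
Local Open Scope ring_scope.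

(* Fix x, y in S and a time T, and call a time t >= T a visit if X_t = x while X
   has avoided y on [T, t].  Given a visit at t, X hits y at time t + m(x,y) with
   conditional probability at least phi(x,y); along a residue class modulo
   m(x,y) these hits are disjoint, because a hit ends the avoidance.  Hence the
   probabilities of the visits in each residue class sum to at most 1/phi(x,y),
   and by Borel-Cantelli X does not visit x infinitely often while avoiding y
   forever.  Since S is locally finite, the same holds for "X <= K infinitely
   often"; taking y > K in S gives limsup X = oo.

   Under the renewal hypothesis, P(tau_n < oo) = p^n with p = P(eta_1 < oo).
   If p < 1 then a.s. some tau_n is infinite, so X eventually avoids 0 and, by the
   above with y = 0, tends to infinity.  If p = 1 then a.s. X returns to 0
   infinitely often and, being nonnegative, has liminf 0. *)

Definition infinitely_often (Q : nat -> Prop) := forall n, exists2 t, (n <= t)%N & Q t.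

Lemma lim_sup_setP T (F : (set T)^nat) w :
  lim_sup_set F w <-> infinitely_often (fun j => F j w).
Proof. by split=> h n; [have [j] := h n I; exists j | have [j] := h n; exists j]. Qed.

Lemma infinitely_often_pigeonhole {A : eqType} {s : seq A} {f : nat -> A}
    {Q : nat -> Prop} :
  infinitely_often (fun t => Q t /\ f t \in s) ->
  exists2 x, x \in s & infinitely_often (fun t => Q t /\ f t = x).
Proof.
elim: s => [|a s IH] io_s; first by have [t _ []] := io_s 0%N.
have [io_a|] := pselect (infinitely_often (fun t => Q t /\ f t = a)).
  by exists a; rewrite ?mem_head.
move=> /existsNP[N not_a].
have [|x xs io_x] := IH; last by exists x; rewrite // in_cons xs orbT.
move=> n; have [t + [Qt]] := io_s (maxn n N); rewrite geq_max => /andP[nt Nt].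
rewrite in_cons => /orP[/eqP fta|fts]; last by exists t.
by case: not_a; exists t.
Qed.

Lemma infinitely_often_residue {Q : nat -> Prop} {k} : (0 < k)%N ->
  infinitely_often Q -> exists r, infinitely_often (fun j => Q (r + j * k)%N).
Proof.
move=> k0 io_Q.
have [|r _ io_r] := @infinitely_often_pigeonhole _ (iota 0 k) (modn^~ k) Q.
  by move=> n; have [t nt Qt] := io_Q n; exists t; rewrite ?mem_iota ?ltn_pmod.
exists r => N; have [t + [Qt tr]] := io_r (N * k)%N.
by rewrite -leq_divRL // => Nt; exists (t %/ k)%N; rewrite // -tr addnC -divn_eq.
Qed.

Lemma limn_esup_pinfty (R : realType) (u : nat -> R) :
  (forall A : R, infinitely_often (fun t => A < u t)) ->
  limn_esup (fun t => (u t)%:E) = +oo%E.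
Proof.
move=> io_u; rewrite limn_esup_lim.
suff -> : esups (fun t => (u t)%:E) = fun=> +oo%E by exact: lim_cst.
apply/funext => n; apply/eq_infty => A; have [t nt At] := io_u A n.
apply: (@le_trans _ _ (u t)%:E); first by rewrite lee_fin ltW.
by apply: ereal_sup_ubound; exists t.
Qed.

Lemma limn_einf_eq0 (R : realType) (u : nat -> R) :
  (forall t, (1 <= t)%N -> 0 <= u t) -> infinitely_often (fun t => u t = 0) ->
  limn_einf (fun t => (u t)%:E) = 0%:E.
Proof.
move=> u_ge0 io_0; rewrite limn_einf_lim; apply: lim_near_cst => //.
exists 1%N => // n n1 /=; apply/eqP; rewrite eq_le; apply/andP; split.
  by have [t nt ut] := io_0 n; apply: ereal_inf_lbound; exists t; rewrite /= ?ut.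
by apply/ereal_infP => _ [t /= nt <-]; rewrite lee_fin u_ge0 // (leq_trans n1 nt).
Qed.

Lemma le_exprn_le0 (R : realType) (r z : R) : 0 <= r -> r < 1 ->
  (forall n, z <= r ^+ n) -> z <= 0.
Proof.
move=> r_ge0 r_lt1 z_le; rewrite leNgt; apply/negP => z_gt0.
have /cvgr_lt/(_ _ z_gt0)[N _ rN] : r ^+ n @[n --> \oo] --> 0.
  by apply: cvg_expr; rewrite ger0_norm.
by have := rN N (leqnn N); rewrite ltNge z_le.
Qed.

Section return_times.
Context {Omega : Type} {R : realType} (X : nat -> Omega -> R).

Definition ret_finite n := [set w | isSome (ret_time X n w)].

Lemma next_zeroP s w k : next_zero X s w = Some k <->
  [/\ (s < k)%N, X k w = 0 & forall u, (s < u < k)%N -> X u w <> 0].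
Proof.
rewrite /next_zero; case: pselect => [h|h]; last first.
  by split => // -[sk Xk _]; case: h; exists k; rewrite sk Xk eqxx.
case: ex_minnP => k0 /andP[sk0 /eqP Xk0] k0_min; split.
  move=> [<-]; split => // u /andP[su uk] Xu.
  by have := k0_min u; rewrite su Xu eqxx leqNgt uk => /(_ isT).
move=> [sk Xk k_min]; congr Some; apply/eqP; rewrite eqn_leq k0_min ?sk ?Xk ?eqxx //=.
by rewrite leqNgt; apply/negP => k0k; apply: (k_min k0); rewrite ?sk0.
Qed.

Lemma ret_finite0 : ret_finite 0 = setT.
Proof. by apply/seteqP; split. Qed.

Lemma exc_len1E : [set w | isSome (exc_len X 1 w)] = ret_finite 1.
Proof. by apply/seteqP; split => w; rewrite /ret_finite /exc_len /=; case: next_zero. Qed.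

Lemma exc_lenSE n :
  [set w | isSome (exc_len X n.+1 w)] `&` ret_finite n = ret_finite n.+1.
Proof.
apply/seteqP; split => w; rewrite /ret_finite /exc_len /=;
  case: (ret_time X n w) => [j|] //=; [by case: next_zero => [k|] //= -[] | by case |].
by case: next_zero.
Qed.

Lemma ret_time_gt {n w k} : ret_time X n w = Some k -> (n < k)%N.
Proof.
elim: n k => [k [<-] //|n IH k] /=.
case E: (ret_time X n w) => [j|] //= /next_zeroP[jk _ _].
exact: leq_ltn_trans (IH j E) jk.
Qed.

Lemma ret_finiteN_eventually_neq0 {n w} : ~ ret_finite n w ->
  exists T, forall s, (T < s)%N -> X s w <> 0.
Proof.
rewrite /ret_finite /=; elim: n => // n IH /=.
case E: (ret_time X n w) => [j|] /=; last by move=> _; apply: IH; rewrite E.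
rewrite /next_zero; case: pselect => // no_zero _; exists j => s js Xs.
by apply: no_zero; exists s; rewrite js Xs eqxx.
Qed.

Lemma ret_finite_io0 w : (forall n, ret_finite n w) ->
  infinitely_often (fun t => X t w = 0).
Proof.
move=> ret_w n; have : isSome (ret_time X n.+1 w) := ret_w n.+1.
case E: (ret_time X n.+1 w) => [k|] // _; exists k.
  by have /ltnW/ltnW := ret_time_gt E.
by move: E => /=; case: (ret_time X n w) => //= j /next_zeroP[].
Qed.

End return_times.

Section process.
Context {R : realType} {d : measure_display} {Omega : measurableType d}
  {P : probability Omega R} {S : set R} {F : nat -> set (set Omega)}
  {X : nat -> Omega -> R} {m : R -> R -> nat} {phi : R -> R -> R}.
Hypotheses (S_lf : locally_finite S) (S_ge0 : S `<=` [set x | 0 <= x])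
  (F_filtration : filtration F) (X_adapted : adapted F X)
  (X_S : forall t, (1 <= t)%N -> forall w, S (X t w))
  (m_phi_gt0 : forall x y, S x -> S y -> (0 < m x y)%N /\ 0 < phi x y)
  (reach_y : forall y, S y -> forall t, (1 <= t)%N -> forall B, F t B ->
     (\int[P]_(w in B) (phi (X t w) y)%:E <=
        P (B `&` [set w | X (t + m (X t w) y)%N w = y]))%E).

Lemma filtration_sigmaE {t} : (1 <= t)%N -> <<s F t >> = F t.
Proof. by move=> t1; have [/(_ t t1)[+ _] _] := F_filtration; exact: sigma_algebra_id. Qed.

Lemma measurable_filtration {t B} : (1 <= t)%N -> F t B -> measurable B.
Proof. by move=> t1; have [/(_ t t1)[_ +] _] := F_filtration; apply. Qed.

Lemma adapted_preimage {s t A} : (1 <= s)%N -> (s <= t)%N -> measurable A ->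
  F t (X s @^-1` A).
Proof.
by move=> s1 st mA; have [_ Fmono] := F_filtration; apply/(Fmono s)/X_adapted.
Qed.

Lemma measurable_X_preimage {s A} : (1 <= s)%N -> measurable A ->
  measurable (X s @^-1` A).
Proof.
move=> s1 mA; apply: (measurable_filtration s1); exact: adapted_preimage.
Qed.

Section avoiding.
Variables (x y : R) (T : nat).
Hypotheses (Sx : S x) (Sy : S y) (T_ge1 : (1 <= T)%N).

Definition visit_avoiding t := [set w | (T <= t)%N /\
  (forall s, (T <= s <= t)%N -> X s w <> y) /\ X t w = x].

Definition hit_after t := visit_avoiding t `&` X (t + m x y)%N @^-1` [set y].

Lemma visit_avoiding0 t : (t < T)%N -> visit_avoiding t = set0.
Proof. by move=> tT; apply/seteqP; split => w // [Tt]; rewrite leqNgt tT in Tt. Qed.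

Lemma visit_avoiding_filtration t : (1 <= t)%N -> F t (visit_avoiding t).
Proof.
(* F t is the sigma-algebra of measurable sets of g_sigma_algebraType (F t),
   where the closure lemmas for measurable sets apply. *)
move=> t1; rewrite -(filtration_sigmaE t1).
have [Tt|tT] := leqP T t; last first.
  by rewrite visit_avoiding0 //; exact: (@measurable0 _ (g_sigma_algebraType (F t))).
have -> : visit_avoiding t = (\bigcap_(s in [set s | (T <= s <= t)%N])
    X s @^-1` ~` [set y]) `&` X t @^-1` [set x].
  apply/seteqP; split => [w [_ [avoid xt]]|w [avoid xt]].
    by split => // s /avoid.
  by split; [|split; [move=> s /avoid|]].
apply: (@measurableI _ (g_sigma_algebraType (F t))).
  apply: (@bigcap_measurableType _ (g_sigma_algebraType (F t))) => s /andP[Ts st].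
  apply: sub_sigma_algebra; apply: adapted_preimage => //.
    exact: leq_trans T_ge1 Ts.
  exact: measurableC (measurable_set1 y).
by apply: sub_sigma_algebra; exact: adapted_preimage t1 (leqnn t) (measurable_set1 x).
Qed.

Let m_gt0 : (0 < m x y)%N. Proof. by have [] := m_phi_gt0 x y Sx Sy. Qed.
Let phi_gt0 : 0 < phi x y. Proof. by have [] := m_phi_gt0 x y Sx Sy. Qed.

Lemma measurable_visit_avoiding t : measurable (visit_avoiding t).
Proof.
have [Tt|tT] := leqP T t; last by rewrite visit_avoiding0.
have t1 := leq_trans T_ge1 Tt.
exact: measurable_filtration t1 (visit_avoiding_filtration _ t1).
Qed.

Lemma measurable_hit_after t : measurable (hit_after t).
Proof.
apply: measurableI; first exact: measurable_visit_avoiding.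
exact: measurable_X_preimage (ltn_addl _ m_gt0) (measurable_set1 y).
Qed.

Lemma hit_after_ge t : ((phi x y)%:E * P (visit_avoiding t) <= P (hit_after t))%E.
Proof.
have [Tt|tT] := leqP T t; last by rewrite visit_avoiding0 // measure0 mule0 measure_ge0.
have t1 := leq_trans T_ge1 Tt.
have := reach_y y Sy t t1 _ (visit_avoiding_filtration _ t1).
rewrite (eq_integral (fun=> (phi x y)%:E)); last by move=> w; rewrite inE => -[_ [_ ->]].
rewrite integral_cst; last exact: measurable_visit_avoiding.
suff -> : visit_avoiding t `&` [set w | X (t + m (X t w) y)%N w = y] = hit_after t by [].
by apply/seteqP; split => w [[Tt' [avoid xt]] hit]; split => //=; [rewrite -xt | rewrite xt].
Qed.

Lemma hit_after_disjoint t t' : (t + m x y <= t')%N ->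
  hit_after t `&` hit_after t' = set0.
Proof.
move=> tt'; apply/seteqP; split => w // [[[Tt _] hit] [[_ [avoid _]] _]].
by apply: (avoid (t + m x y)%N) => //; rewrite tt' (leq_trans Tt (leq_addr _ _)).
Qed.

Lemma hit_after_trivIset r : trivIset setT (fun j => hit_after (r + j * m x y)%N).
Proof.
suff disj i j : (i < j)%N -> hit_after (r + i * m x y) `&` hit_after (r + j * m x y) = set0.
  move=> i j _ _ meet; apply: contrapT => /eqP; rewrite neq_ltn => /orP[] ij.
    by move: meet; rewrite disj // => -[].
  by move: meet; rewrite setIC disj // => -[].
move=> ij; apply: hit_after_disjoint.
by rewrite -addnA leq_add2l -mulSnr leq_mul2r ij orbT.
Qed.

Lemma visit_avoiding_series_lty r :
  (\sum_(0 <= j <oo) P (visit_avoiding (r + j * m x y)%N) < +oo)%E.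
Proof.
have mH j : measurable (hit_after (r + j * m x y)%N) by exact: measurable_hit_after.
have mU : measurable (\bigcup_j hit_after (r + j * m x y)%N) by exact: bigcupT_measurable.
have H_sum : (\sum_(0 <= j <oo) P (hit_after (r + j * m x y)%N) <= 1)%E.
  by rewrite -measure_semi_bigcup //; [exact: probability_le1 | exact: hit_after_trivIset].
have : ((phi x y)%:E * \sum_(0 <= j <oo) P (visit_avoiding (r + j * m x y)%N) <= 1)%E.
  rewrite -nneseriesZl //; apply: le_trans H_sum; apply: lee_nneseries => [j _ _|j _].
    by rewrite mule_ge0 // lee_fin ltW.
  exact: hit_after_ge.
by rewrite -lee_pdivlMl // mule1 => /le_lt_trans; apply; exact: ltry.
Qed.

Lemma avoid_after_visits_negligible :
  P.-negligible [set w | (forall s, (T <= s)%N -> X s w <> y) /\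
                         infinitely_often (fun t => X t w = x)].
Proof.
pose Z r := lim_sup_set (fun j => visit_avoiding (r + j * m x y)%N).
apply: (@negligibleS _ _ _ _ (\bigcup_r Z r)).
  move=> w [avoid io_x].
  have io_T : infinitely_often (fun t => (T <= t)%N /\ X t w = x).
    move=> n; have [t + xt] := io_x (maxn n T).
    by rewrite geq_max => /andP[nt Tt]; exists t.
  have [r io_r] := infinitely_often_residue m_gt0 io_T.
  exists r => //; apply/lim_sup_setP => n; have [j nj [Tj xj]] := io_r n.
  by exists j => //; split => //; split => // s /andP[Ts _]; exact: avoid.
apply: negligible_bigcup => r; apply/negligibleP.
  apply: bigcapT_measurable => n; apply: bigcup_measurable => j _.
  exact: measurable_visit_avoiding.
apply: lim_sup_set_cvg0; first by move=> j; exact: measurable_visit_avoiding.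
exact: visit_avoiding_series_lty.
Qed.

End avoiding.
Lemma avoid_after_bounded_io_negligible K y T : S y -> (1 <= T)%N ->
  P.-negligible [set w | (forall s, (T <= s)%N -> X s w <> y) /\
                         infinitely_often (fun t => X t w <= K)].
Proof.
move=> Sy T_ge1.
have [s0 s0E] : exists s0 : seq R, S `&` [set z | `|z| <= K] = [set` s0].
  by apply/finite_seqP; apply: S_lf; exists K.
have s0S z : z \in s0 -> S z.
  by move=> zs0; have : [set` s0] z by []; rewrite -s0E => -[].
apply: (@negligibleS _ _ _ _ (\bigcup_n [set w | (forall s, (T <= s)%N -> X s w <> y) /\
    infinitely_often (fun t => X t w = nth y s0 n)])).
  move=> w [avoid io_K].
  have io_s0 : infinitely_often (fun t => (1 <= t)%N /\ X t w \in s0).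
    move=> n; have [t + Kt] := io_K (maxn n 1); rewrite geq_max => /andP[nt t1].
    exists t => //; split => //; have : [set` s0] (X t w); last by [].
    rewrite -s0E; split; first exact: X_S.
    by rewrite /= ger0_norm //; apply/S_ge0/X_S.
  have [z zs0 io_z] := infinitely_often_pigeonhole io_s0.
  exists (index z s0) => //; rewrite nth_index //; split => // n.
  by have [t nt [_ zt]] := io_z n; exists t.
apply: negligible_bigcup => n; apply: avoid_after_visits_negligible => //.
by have [ns|sn] := ltnP n (size s0); [exact/s0S/mem_nth | rewrite nth_default].
Qed.

Lemma limn_esup_X_pinfty : unbounded_above S ->
  {ae P, forall w, limn_esup (fun t => (X t w)%:E) = +oo%E}.
Proof.
move=> S_unbounded.
have /choice[y /all_and2[Sy Ky]] : forall K : nat, exists y, S y /\ K%:R < y.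
  by move=> K; have [y Sy Ky] := S_unbounded K%:R; exists y.
apply: (@negligibleS _ _ _ _ (\bigcup_K \bigcup_T [set w |
    (forall s, (T.+1 <= s)%N -> X s w <> y K) /\
    infinitely_often (fun t => X t w <= K%:R)])); last first.
  apply: negligible_bigcup => K; apply: negligible_bigcup => T.
  exact: avoid_after_bounded_io_negligible.
move=> w /= /(contra_not (@limn_esup_pinfty _ _)) /existsNP[A /existsNP[n A_ge]].
have X_le t : (n <= t)%N -> X t w <= A.
  by move=> nt; rewrite leNgt; apply/negP => At; apply: A_ge; exists t.
pose K := (Num.truncn A).+1.
have AK : A <= K%:R by exact/ltW/truncnS_gt.
exists K => //; exists n => //; split.
  move=> s ns Xs; have := X_le s (ltnW ns).
  by rewrite Xs leNgt (le_lt_trans AK (Ky K)).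
by move=> n'; exists (maxn n' n); rewrite ?leq_maxl // (le_trans _ AK) ?X_le ?leq_maxr.
Qed.

Lemma measurable_next_zero j k : measurable [set w | next_zero X j w = Some k].
Proof.
have [jk|kj] := ltnP j k; last first.
  suff -> : [set w | next_zero X j w = Some k] = set0 by exact: measurable0.
  by apply/seteqP; split => w // /next_zeroP[jk _ _]; rewrite leqNgt jk in kj.
have -> : [set w | next_zero X j w = Some k] = X k @^-1` [set 0] `&`
    \bigcap_(u in [set u | (j < u < k)%N]) X u @^-1` [set~ 0].
  apply/seteqP; split => w.
    by move=> /next_zeroP[_ Xk k_min]; split => // u /k_min.
  by move=> [Xk k_min]; apply/next_zeroP; split => // u /k_min.
apply: measurableI.
  exact: measurable_X_preimage (leq_ltn_trans (leq0n j) jk) (measurable_set1 _).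
apply: bigcap_measurableType => u /andP[ju _].
exact: measurable_X_preimage (leq_ltn_trans (leq0n j) ju) (measurableC (measurable_set1 _)).
Qed.

Lemma measurable_ret_time n k : measurable [set w | ret_time X n w = Some k].
Proof.
elim: n k => [|n IH] k /=.
  have [->|k1] := eqVneq k 1%N; first by rewrite (_ : [set w | _] = setT) //; apply/seteqP.
  rewrite (_ : [set w | _] = set0) //.
  by apply/seteqP; split => w // [e]; rewrite e eqxx in k1.
have -> : [set w | obind (next_zero X ^~ w) (ret_time X n w) = Some k] =
    \bigcup_j ([set w | ret_time X n w = Some j] `&` [set w | next_zero X j w = Some k]).
  apply/seteqP; split => w /=; last by move=> [j _ [/= E1 E2]]; rewrite E1.
  by case E: (ret_time X n w) => [j|] // jk; exists j.
apply: bigcupT_measurable => j.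
by apply: measurableI; [exact: IH | exact: measurable_next_zero].
Qed.

Lemma measurable_ret_finite n : measurable (ret_finite X n).
Proof.
have -> : ret_finite X n = \bigcup_k [set w | ret_time X n w = Some k].
  apply/seteqP; split => w; rewrite /ret_finite /=; last by move=> [k _ ->].
  by case E: (ret_time X n w) => [k|] // _; exists k.
by apply: bigcupT_measurable => k; exact: measurable_ret_time.
Qed.

Section excursions.
Hypothesis exc_indep : forall n, (1 <= n)%N ->
  P ([set w | isSome (exc_len X n.+1 w)] `&` ret_finite X n) =
  (P [set w | isSome (exc_len X 1 w)] * P (ret_finite X n))%E.

Let p := fine (P (ret_finite X 1)).

Let P_ret_finite1 : P (ret_finite X 1) = p%:E.
Proof. by rewrite fineK // fin_num_measure //; exact: measurable_ret_finite. Qed.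

Lemma P_ret_finite n : P (ret_finite X n) = (p ^+ n)%:E.
Proof.
elim: n => [|[|n] IH]; first by rewrite ret_finite0 probability_setT expr0.
  by rewrite expr1.
by rewrite -exc_lenSE exc_indep // exc_len1E IH P_ret_finite1 -EFinM -exprS.
Qed.

Lemma X_cvgy_of_P_ret_finite_lt1 : S 0 -> (P (ret_finite X 1) < 1)%E ->
  {ae P, forall w, (fun t => X t w) @ \oo --> +oo}.
Proof.
move=> S0; rewrite P_ret_finite1 lte_fin => p_lt1.
pose Z := \bigcap_n ret_finite X n.
have mZ : measurable Z by exact: bigcapT_measurable measurable_ret_finite.
have PZ : P Z = 0%E.
  have Z_le n : (P Z <= (p ^+ n)%:E)%E.
    rewrite -P_ret_finite; apply: le_measure; rewrite ?inE //.
      exact: measurable_ret_finite.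
    by move=> w; apply.
  apply/eqP; rewrite eq_le measure_ge0 andbT -(fineK (fin_num_measure P _ mZ)) lee_fin.
  apply: (@le_exprn_le0 _ p) => //; first exact/fine_ge0/measure_ge0.
  by move=> n; rewrite -lee_fin fineK ?fin_num_measure.
apply: (@negligibleS _ _ _ _ (Z `|` \bigcup_K \bigcup_T [set w |
    (forall s, (T.+1 <= s)%N -> X s w <> 0) /\
    infinitely_often (fun t => X t w <= K%:R)])); last first.
  apply: negligibleU; first by exists Z; split.
  apply: negligible_bigcup => K; apply: negligible_bigcup => T.
  exact: avoid_after_bounded_io_negligible.
move=> w /=; apply: contra_notP => not_cover.
have /existsNP[n /not_implyP[_ not_ret]] : ~ Z w by move=> Zw; apply: not_cover; left.
have [T neq0] := ret_finiteN_eventually_neq0 X not_ret.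
apply/cvgryPge => A; pose K := (Num.truncn A).+1.
have /existsNP[N K_lt] : ~ infinitely_often (fun t => X t w <= K%:R).
  by move=> io_K; apply: not_cover; right; exists K => //; exists T.
exists N => // t Nt /=; apply: le_trans (ltW (truncnS_gt A)) _.
by rewrite leNgt; apply/negP => XK; apply: K_lt; exists t => //; exact: ltW.
Qed.

Lemma X_liminf0_of_P_ret_finite_eq1 : P (ret_finite X 1) = 1%E ->
  {ae P, forall w, limn_einf (fun t => (X t w)%:E) = 0%:E}.
Proof.
rewrite P_ret_finite1 => -[p1].
apply: (@negligibleS _ _ _ _ (\bigcup_n ~` ret_finite X n)); last first.
  apply: negligible_bigcup => n.
  apply/negligibleP; first exact/measurableC/measurable_ret_finite.
  apply: etrans (@probability_setC _ _ _ P _ (measurable_ret_finite n)) _.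
  by rewrite P_ret_finite p1 expr1n subee.
move=> w /=; apply: contra_notP => not_cover; apply: limn_einf_eq0.
  by move=> t t1; apply/S_ge0/X_S.
by apply: ret_finite_io0 => n; apply: contrapT => not_ret; apply: not_cover; exists n.
Qed.

End excursions.

End process.
Theorem proposition2p1 (R : realType) (d : measure_display)
  (Omega : measurableType d) (P : probability Omega R)
  (S : set R) (F : nat -> set (set Omega)) (X : nat -> Omega -> R)
  (m : R -> R -> nat) (phi : R -> R -> R) :
  locally_finite S -> unbounded_above S -> S `<=` [set x | 0 <= x] -> S 0 ->
  filtration F -> adapted F X ->
  (forall t, (1 <= t)%N -> forall w, S (X t w)) ->
  P [set w | X 1%N w = 0] = 1%E ->
  (forall x y, S x -> S y -> (0 < m x y)%N /\ 0 < phi x y) ->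
  (* P[X_{t + m(X_t,y)} = y | F_t] >= phi(X_t, y) a.s., for all t >= 1 and y in S *)
  (forall y, S y -> forall t, (1 <= t)%N -> forall B, F t B ->
     (\int[P]_(w in B) (phi (X t w) y)%:E <=
        P (B `&` [set w | X (t + m (X t w) y)%N w = y]))%E) ->
  {ae P, forall w, limn_esup (fun t => (X t w)%:E) = +oo%E} /\
  ((forall n, (1 <= n)%N ->
      (* P[eta_{n+1} < oo | tau_n < oo] = P[eta_1 < oo], in product form *)
      P ([set w | isSome (exc_len X n.+1 w)] `&` [set w | isSome (ret_time X n w)]) =
        (P [set w | isSome (exc_len X 1 w)] * P [set w | isSome (ret_time X n w)])%E) ->
   let i := (P [set w | isSome (exc_len X 1 w)] < 1)%E /\
            {ae P, forall w, (fun t => X t w) @ \oo --> +oo} in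
   let ii := P [set w | isSome (exc_len X 1 w)] = 1%E /\
            {ae P, forall w, limn_einf (fun t => (X t w)%:E) = (0:R)%:E} in
   (i \/ ii) /\ ~ (i /\ ii)).
Proof.
move=> S_lf S_unbounded S_ge0 S0 F_filt X_adapt X_S _ m_phi_gt0 reach_y.
split.
  exact: limn_esup_X_pinfty S_lf S_ge0 F_filt X_adapt X_S m_phi_gt0 reach_y
    S_unbounded.
move=> exc_indep; rewrite exc_len1E /=.
have mR1 : measurable (ret_finite X 1) by exact: measurable_ret_finite F_filt X_adapt 1%N.
split; last by move=> [[p_lt1 _] [p_eq1 _]]; rewrite p_eq1 ltxx in p_lt1.
have := probability_le1 P mR1; rewrite le_eqVlt => /orP[/eqP p_eq1|p_lt1].
  right; split => //.
  exact: X_liminf0_of_P_ret_finite_eq1 S_ge0 F_filt X_adapt X_S exc_indep p_eq1.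
left; split => //.
exact: X_cvgy_of_P_ret_finite_lt1 S_lf S_ge0 F_filt X_adapt X_S m_phi_gt0 reach_y
  exc_indep S0 p_lt1.
Qed.
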